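(* In the setting of the context, for every $j\ge0$, the generating function $\varphi_j(x)=\sum_{i\ge0}\pi_{i,j}x^i$ satisfies $$\varphi_j(x)\sim C^j\pi_{0,0}(1-r_0x)^{-j-1}\quad\text{as } r_0x\to1,$$ i.e. $\lim_{r_0x\to1}(1-r_0x)^{j+1}\varphi_j(x)=C^j\pi_{0,0}$, where $$C=\frac{q}{\bar q}\cdot\frac{\bar p\mu_hr_0^2+(p\mu_h+\bar p\bar\mu_h)r_0+p\bar\mu_h}{p\bar\mu_h-\bar p\mu_hr_0^2}.$$
   Context: Fix $p,q,\mu_h,\mu_l\in(0,1)$ with $p+q+\mu_h+\mu_l=1$ and $\mu_l\le\mu_h$. For real $x$ write $\bar x=1-x$; let $\rho=p/\mu_h+q/\mu_l$ and assume $\rho<1$. Let $(Q_1(n),Q_2(n))_{n\ge0}$ be the discrete-time Markov chain on $\mathbb{Z}_{\ge0}^2$ (numbers of high- and low-priority customers in a discrete-time preemptive priority queue, early arrival system) whose one-step transition probabilities from $(i,j)$ to $(i+k,j+l)$ are as follows (unlisted transitions have probability $0$). If $i\ge1$, $j\ge0$: $(k,l)=(1,0)$: $p\bar q\bar\mu_h$; $(1,1)$: $pq\bar\mu_h$; $(0,1)$: $pq\mu_h+\bar pq\bar\mu_h$; $(-1,1)$: $\bar pq\mu_h$; $(-1,0)$: $\bar p\bar q\mu_h$; $(0,0)$: $\bar p\bar q\bar\mu_h+p\bar q\mu_h$. If $i=0$, $j\ge1$: $(1,0)$: $p\bar q\bar\mu_h$; $(1,1)$: $pq\bar\mu_h$;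 $(0,1)$: $pq\mu_h+\bar pq\bar\mu_l$; $(0,-1)$: $\bar p\bar q\mu_l$; $(0,0)$: $\bar p\bar q\bar\mu_l+p\bar q\mu_h+\bar pq\mu_l$. If $(i,j)=(0,0)$: $(1,0)$: $p\bar q\bar\mu_h$; $(1,1)$: $pq\bar\mu_h$; $(0,1)$: $pq\mu_h+\bar pq\bar\mu_l$; $(0,0)$: $\bar p\bar q+p\bar q\mu_h+\bar pq\mu_l$. Let $(\pi_{i,j})_{i,j\ge0}$ be its stationary distribution. Let $r_0=1/x_1(0)$, where $x_1(0)=\frac{1-(p\mu_h+\bar p\bar\mu_h)\bar q+\sqrt{\Delta(0)}}{2p\bar\mu_h\bar q}$ with $\Delta(0)=(p\mu_h-\bar p\bar\mu_h)^2\bar q^2-2(p\mu_h+\bar p\bar\mu_h)\bar q+1>0$ and the positive square root; $\varphi_j$ is understood as its analytic continuation to a neighbourhood of $1/r_0$ minus the point $1/r_0$, and the limit is taken within a $\Delta$-domain at $1/r_0$. *)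

From Stdlib Require Import Reals.
From Coquelicot Require Import Coquelicot.
Open Scope R_scope.
Open Scope bool_scope.

Definition bar (x : R) : R := 1 - x.

Definition params_ok (p q muh mul : R) : Prop :=
  0 < p < 1 /\ 0 < q < 1 /\ 0 < muh < 1 /\ 0 < mul < 1 /\
  p + q + muh + mul = 1 /\ mul <= muh /\ p / muh + q / mul < 1.

(* one-step transition probability from (i,j) to (k,l) *)
Definition trans (p q muh mul : R) (i j k l : nat) : R :=
  if (1 <=? i)%nat then
    if (k =? i + 1)%nat && (l =? j)%nat then p * bar q * bar muh
    else if (k =? i + 1)%nat && (l =? j + 1)%nat then p * q * bar muh
    else if (k =? i)%nat && (l =? j + 1)%nat then p * q * muh + bar p * q * bar muh
    else if (k + 1 =? i)%nat && (l =? j + 1)%nat then bar p * q * muh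
    else if (k + 1 =? i)%nat && (l =? j)%nat then bar p * bar q * muh
    else if (k =? i)%nat && (l =? j)%nat then bar p * bar q * bar muh + p * bar q * muh
    else 0
  else if (1 <=? j)%nat then
    if (k =? 1)%nat && (l =? j)%nat then p * bar q * bar muh
    else if (k =? 1)%nat && (l =? j + 1)%nat then p * q * bar muh
    else if (k =? 0)%nat && (l =? j + 1)%nat then p * q * muh + bar p * q * bar mul
    else if (k =? 0)%nat && (l + 1 =? j)%nat then bar p * bar q * mul
    else if (k =? 0)%nat && (l =? j)%nat then
      bar p * bar q * bar mul + p * bar q * muh + bar p * q * mul
    else 0
  else
    if (k =? 1)%nat && (l =? 0)%nat then p * bar q * bar muh
    else if (k =? 1)%nat && (l =? 1)%nat then p * q * bar muh
    else if (k =? 0)%nat && (l =? 1)%nat then p * q * muh + bar p * q * bar mul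
    else if (k =? 0)%nat && (l =? 0)%nat then bar p * bar q + p * bar q * muh + bar p * q * mul
    else 0.

Fixpoint fsum (n : nat) (f : nat -> R) : R :=
  match n with
  | O => f O
  | S m => fsum m f + f (S m)
  end.

(* pi is a stationary distribution of the chain.  Since trans i j k l = 0
   unless i <= k+1 and j <= l+1, the balance sum over all (i,j) reduces
   exactly to the finite sum over i <= k+1, j <= l+1. *)
Definition stationary (p q muh mul : R) (pi : nat -> nat -> R) : Prop :=
  (forall i j, 0 <= pi i j) /\
  (forall i, ex_series (fun j => pi i j)) /\
  is_series (fun i => Series (fun j => pi i j)) 1 /\
  (forall k l, pi k l =
     fsum (k + 1) (fun i => fsum (l + 1) (fun j => pi i j * trans p q muh mul i j k l))).

Definition Delta0 (p q muh : R) : R :=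
  (p * muh - bar p * bar muh) ^ 2 * (bar q) ^ 2
  - 2 * (p * muh + bar p * bar muh) * bar q + 1.

Definition x1_0 (p q muh : R) : R :=
  (1 - (p * muh + bar p * bar muh) * bar q + sqrt (Delta0 p q muh))
  / (2 * p * bar muh * bar q).

Definition r0 (p q muh : R) : R := / x1_0 p q muh.

Definition Cconst (p q muh : R) : R :=
  let r := r0 p q muh in
  q / bar q * ((bar p * muh * r ^ 2 + (p * muh + bar p * bar muh) * r + p * bar muh)
               / (p * bar muh - bar p * muh * r ^ 2)).

(* Open sector condition |arg w| > phi, written out for w <> 0:
   Re w < |w| cos phi. *)
Definition arg_gt (phi : R) (w : C) : Prop :=
  Re w < Cmod w * cos phi.

(* In the interior, the balance equation at (i + 1, l) says that each row i |-> pi_{i,l}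
   solves the second-order recurrence L pi_{.,l} = - G pi_{.,l-1}, whose characteristic
   polynomial has roots r0 < 1 < z.  Summability of pi excludes the z^i solutions, so by
   induction on l the row is pi_{i,l} = sum_{m <= l} c_m binom(m + i, m) r0^i, and each
   step multiplies the top coefficient by -chi_G(r0) / (r0 chi_L'(r0)) = C, whence
   c_l = C^l pi_{0,0}.  Therefore phi_l(x) = sum_{m <= l} c_m (1 - r0 x)^-(m+1) is rational
   with a single pole at 1/r0, and (1 - r0 x)^(l+1) phi_l(x) tends to c_l there. *)

From Stdlib Require Import Reals Lra Lia FunctionalExtensionality.
From Coquelicot Require Import Coquelicot.
Open Scope R_scope.

(** * Finite sums and binomial coefficients *)

Lemma fsum_ext (n : nat) (f g : nat -> R) :
  (forall i, (i <= n)%nat -> f i = g i) -> fsum n f = fsum n g.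
Proof.
  induction n as [|n IHn]; intros Hfg; simpl.
  - apply Hfg; lia.
  - rewrite IHn by (intros; apply Hfg; lia). rewrite Hfg by lia. reflexivity.
Qed.

Lemma fsum_plus (n : nat) (f g : nat -> R) :
  fsum n (fun i => f i + g i) = fsum n f + fsum n g.
Proof. induction n as [|n IHn]; simpl; [|rewrite IHn]; ring. Qed.

Lemma fsum_scal (n : nat) (a : R) (f : nat -> R) :
  fsum n (fun i => a * f i) = a * fsum n f.
Proof. induction n as [|n IHn]; simpl; [|rewrite IHn]; ring. Qed.

Lemma fsum_last (n : nat) (f : nat -> R) :
  (forall i, (i < n)%nat -> f i = 0) -> fsum n f = f n.
Proof.
  induction n as [|n IHn]; intros Hf; simpl; [reflexivity|].
  rewrite IHn by (intros; apply Hf; lia). rewrite (Hf n) by lia. ring.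
Qed.

Lemma fsum_last_three (n : nat) (f : nat -> R) :
  (forall i, (i < n)%nat -> f i = 0) -> fsum (S (S n)) f = f n + f (S n) + f (S (S n)).
Proof. intros Hf. simpl. rewrite fsum_last by exact Hf. reflexivity. Qed.

Lemma fsum_nonneg (n : nat) (f : nat -> R) : (forall i, 0 <= f i) -> 0 <= fsum n f.
Proof.
  intros Hf; induction n as [|n IHn]; simpl; [apply Hf | apply Rplus_le_le_0_compat; auto].
Qed.

Lemma fsum_ge_last (n : nat) (f : nat -> R) : (forall i, 0 <= f i) -> f n <= fsum n f.
Proof.
  intros Hf; destruct n as [|n]; simpl; [lra|].
  pose proof (fsum_nonneg n f Hf); lra.
Qed.

Lemma fsum_sum_f_R0 (n : nat) (f : nat -> R) : fsum n f = sum_f_R0 f n.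
Proof. induction n as [|n IHn]; simpl; [|rewrite IHn]; reflexivity. Qed.

(* [nbinom m k] is the binomial coefficient (m + k choose m), i.e. the coefficient
   of [w ^ k] in [(1 - w) ^ -(m + 1)]. *)
Fixpoint nbinom (m k : nat) : R :=
  match m with
  | O => 1
  | S m' => fsum k (nbinom m')
  end.

Lemma nbinom_0_r (m : nat) : nbinom m 0 = 1.
Proof. induction m; auto. Qed.

Lemma nbinom_S_S (m k : nat) : nbinom (S m) (S k) = nbinom (S m) k + nbinom m (S k).
Proof. reflexivity. Qed.

Lemma nbinom_S_r (m k : nat) : nbinom m (S k) = fsum m (fun j => nbinom j k).
Proof.
  induction m as [|m IHm]; [reflexivity|].
  rewrite nbinom_S_S, IHm. simpl. ring.
Qed.

Lemma nbinom_pos (m k : nat) : 0 < nbinom m k.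
Proof.
  revert k; induction m as [|m IHm]; intros k; simpl; [lra|].
  induction k as [|k IHk]; simpl; [apply IHm|]. specialize (IHm (S k)); lra.
Qed.

Lemma is_series_nbinom_R (w : R) (m : nat) : 0 <= w < 1 ->
  is_series (fun k => nbinom m k * w ^ k) ((/ (1 - w)) ^ S m).
Proof.
  intros Hw.
  assert (Hgeom : is_series (fun k => w ^ k) (/ (1 - w)))
    by (apply is_series_geom; rewrite Rabs_pos_eq; lra).
  assert (Habs : forall a l, is_series a l -> (forall k, 0 <= a k) ->
                             ex_series (fun k => Rabs (a k))).
  { intros a l Hal Ha. exists l. eapply is_series_ext; [|exact Hal].
    intros k. rewrite Rabs_pos_eq; auto. }
  induction m as [|m IHm].
  - eapply is_series_ext; [|rewrite pow_1; exact Hgeom]. intros k; simpl; ring.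
  - pose proof (is_series_mult _ _ _ _ IHm Hgeom) as Hmult.
    replace ((/ (1 - w)) ^ S (S m)) with ((/ (1 - w)) ^ S m * / (1 - w)) by (simpl; ring).
    eapply is_series_ext; [|apply Hmult].
    + intros n. cbv beta. rewrite <- fsum_sum_f_R0.
      rewrite (fsum_ext n _ (fun k => w ^ n * nbinom m k)).
      * rewrite fsum_scal. simpl. ring.
      * intros k Hk. replace n with (k + (n - k))%nat at 2 by lia. rewrite pow_add. ring.
    + apply (Habs _ _ IHm). intros k.
      apply Rmult_le_pos; [left; apply nbinom_pos | apply pow_le; lra].
    + apply (Habs _ _ Hgeom). intros k. apply pow_le; lra.
Qed.

Lemma is_lim_seq_nbinom_geom (w : R) (m : nat) : 0 <= w < 1 ->
  is_lim_seq (fun k => nbinom m k * w ^ k) 0.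
Proof. intros Hw. apply ex_series_lim_0. eexists. apply is_series_nbinom_R, Hw. Qed.

(** * Second-order linear recurrences *)

Definition rec2 (a b c : R) (s : nat -> R) (k : nat) : R :=
  a * s (S (S k)) + b * s (S k) + c * s k.

Definition char2 (a b c x : R) : R := a * x ^ 2 + b * x + c.

Definition bgeom (r : R) (j k : nat) : R := nbinom j k * r ^ k.

(* The sequence [k |-> P k * r ^ k] with [deg P <= m] whose coordinates in the basis
   [bgeom r j], [j <= m], are the [d j]. *)
Definition pgeom (r : R) (m : nat) (d : nat -> R) (k : nat) : R :=
  fsum m (fun j => d j * bgeom r j k).

Lemma pgeom_S (r : R) (m : nat) (d : nat -> R) (k : nat) :
  pgeom r (S m) d k = pgeom r m d k + d (S m) * bgeom r (S m) k.
Proof. reflexivity. Qed.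

Lemma pgeom_ext (r : R) (m : nat) (d d' : nat -> R) (k : nat) :
  (forall j, (j <= m)%nat -> d j = d' j) -> pgeom r m d k = pgeom r m d' k.
Proof. intros Hd. apply fsum_ext. intros j Hj. rewrite Hd by exact Hj. reflexivity. Qed.

Lemma pgeom_minus_const (r : R) (m : nat) (d : nat -> R) (x : R) (k : nat) :
  pgeom r m (fun j => d j - x) k = pgeom r m d k - x * fsum m (fun j => bgeom r j k).
Proof.
  unfold pgeom. induction m as [|m IHm]; simpl; [|rewrite IHm]; ring.
Qed.

Lemma rec2_pgeom (a b c r : R) (m : nat) (d : nat -> R) (k : nat) :
  rec2 a b c (pgeom r m d) k = fsum m (fun j => d j * rec2 a b c (bgeom r j) k).
Proof. unfold rec2, pgeom. induction m as [|m IHm]; simpl; [|rewrite <- IHm]; ring. Qed.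

Lemma bgeom_S_r (r : R) (j k : nat) : bgeom r j (S k) = r * fsum j (fun i => bgeom r i k).
Proof.
  unfold bgeom. rewrite nbinom_S_r, Rmult_comm, <- !fsum_scal.
  apply fsum_ext. intros i _. simpl. ring.
Qed.

Section Rec2OnBasis.

Variables (a b c r : R).
Hypothesis r_neq0 : r <> 0.

Lemma bgeom_0_l (k : nat) : bgeom r 0 k = bgeom r 0 (S k) / r.
Proof. unfold bgeom. simpl. field. exact r_neq0. Qed.

Lemma bgeom_S_l (j k : nat) :
  bgeom r (S j) k = (bgeom r (S j) (S k) - bgeom r j (S k)) / r.
Proof. unfold bgeom. rewrite nbinom_S_S. simpl. field. exact r_neq0. Qed.

Lemma rec2_bgeom_0 (k : nat) :
  rec2 a b c (bgeom r 0) k = char2 a b c r / r * bgeom r 0 (S k).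
Proof.
  unfold rec2, char2. rewrite (bgeom_S_r r 0 (S k)), (bgeom_0_l k). simpl.
  field. exact r_neq0.
Qed.

Lemma rec2_bgeom_S (j k : nat) :
  rec2 a b c (bgeom r (S j)) k =
  char2 a b c r / r * bgeom r (S j) (S k)
  + a * r * fsum j (fun i => bgeom r i (S k)) - c / r * bgeom r j (S k).
Proof.
  unfold rec2, char2. rewrite (bgeom_S_r r (S j) (S k)), (bgeom_S_l j k). simpl.
  field. exact r_neq0.
Qed.

Lemma rec2_pgeom_image (m : nat) (d : nat -> R) :
  exists e, e m = char2 a b c r / r * d m /\
    forall k, rec2 a b c (pgeom r m d) k = pgeom r m e (S k).
Proof.
  set (kappa := char2 a b c r / r).
  induction m as [|m [e [_ He]]].
  - exists (fun _ => kappa * d 0%nat). split; [reflexivity|].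
    intros k. rewrite rec2_pgeom. simpl. rewrite rec2_bgeom_0.
    unfold pgeom. simpl. fold kappa. ring.
  - exists (fun j => if (j =? S m)%nat then kappa * d (S m)
              else e j + d (S m) * (a * r) - (if (j =? m)%nat then d (S m) * (c / r) else 0)).
    split; [rewrite Nat.eqb_refl; reflexivity|].
    intros k.
    assert (Hsplit : rec2 a b c (pgeom r (S m) d) k
                     = rec2 a b c (pgeom r m d) k + d (S m) * rec2 a b c (bgeom r (S m)) k)
      by (unfold rec2; rewrite !pgeom_S; ring).
    rewrite Hsplit, He, rec2_bgeom_S, pgeom_S, Nat.eqb_refl.
    rewrite (pgeom_ext r m (fun j => if (j =? S m)%nat then kappa * d (S m)
              else e j + d (S m) * (a * r) - (if (j =? m)%nat then d (S m) * (c / r) else 0))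
      (fun j => e j + d (S m) * (a * r) - (if (j =? m)%nat then d (S m) * (c / r) else 0))).
    2:{ intros j Hj. destruct (Nat.eqb_spec j (S m)); [lia|reflexivity]. }
    unfold pgeom.
    replace (fun j => (e j + d (S m) * (a * r) - (if (j =? m)%nat then d (S m) * (c / r) else 0))
                      * bgeom r j (S k))
      with (fun j => (e j * bgeom r j (S k) + d (S m) * (a * r) * bgeom r j (S k))
                     + -1 * (if (j =? m)%nat then d (S m) * (c / r) * bgeom r j (S k) else 0))
      by (apply functional_extensionality; intros j; destruct (j =? m)%nat; ring).
    rewrite !fsum_plus, !fsum_scal, (fsum_last m (fun j => if (j =? m)%nat then _ else 0)).
    2:{ intros i Hi. destruct (Nat.eqb_spec i m); [lia|reflexivity]. }
    rewrite Nat.eqb_refl. fold kappa. ring.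
Qed.

Hypothesis r_root : char2 a b c r = 0.
Hypothesis r_simple : 2 * a * r + b <> 0.

(* At the root [r], the coefficient [2 a r + b = a r - c / r] is the diagonal of the
   triangular system [d |-> e]; it is invertible because [r] is a simple root. *)
Lemma rec2_pgeom_preimage (m : nat) (e : nat -> R) :
  exists d, (2 * a * r + b) * d (S m) = e m /\
    forall k, rec2 a b c (pgeom r (S m) d) k = pgeom r m e (S k).
Proof.
  set (lam := 2 * a * r + b) in *.
  assert (Hc : c / r = a * r - lam).
  { unfold lam. unfold char2 in r_root. apply Rmult_eq_reg_r with r; [|exact r_neq0].
    field_simplify; [|exact r_neq0]. simpl in r_root. lra. }
  assert (Hu : forall j k, rec2 a b c (bgeom r (S j)) k
                = a * r * fsum j (fun i => bgeom r i (S k)) - (a * r - lam) * bgeom r j (S k))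
    by (intros j k; rewrite rec2_bgeom_S, r_root, Hc; unfold Rdiv at 1; ring).
  clearbody lam.
  revert e; induction m as [|m IHm]; intros e.
  - exists (fun j => if (j =? 1)%nat then e 0%nat / lam else 0). split.
    + simpl. field; repeat split; assumption.
    + intros k. rewrite rec2_pgeom. simpl. rewrite rec2_bgeom_0, r_root, Hu.
      unfold pgeom. simpl. field; repeat split; assumption.
  - set (t := e (S m) / lam).
    destruct (IHm (fun j => e j - t * (a * r))) as [d [_ Hd]].
    exists (fun j => if (j =? S (S m))%nat then t else d j). split.
    + rewrite Nat.eqb_refl. unfold t. field; repeat split; assumption.
    + intros k.
      assert (Hsum : forall k, pgeom r (S (S m)) (fun j => if (j =? S (S m))%nat then t else d j) k
                             = pgeom r (S m) d k + t * bgeom r (S (S m)) k).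
      { intros k'. rewrite pgeom_S, Nat.eqb_refl. f_equal. apply pgeom_ext.
        intros j Hj. destruct (Nat.eqb_spec j (S (S m))); [lia|reflexivity]. }
      assert (Hsplit :
                rec2 a b c (pgeom r (S (S m)) (fun j => if (j =? S (S m))%nat then t else d j)) k
                       = rec2 a b c (pgeom r (S m) d) k + t * rec2 a b c (bgeom r (S (S m))) k)
        by (unfold rec2; rewrite !Hsum; ring).
      rewrite Hsplit, Hd, Hu, pgeom_minus_const, !pgeom_S. simpl fsum.
      unfold t. field; repeat split; assumption.
Qed.

End Rec2OnBasis.

Lemma rec2_general_solution (a b c r z : R) (e : nat -> R) :
  a <> 0 -> r <> z -> char2 a b c r = 0 -> char2 a b c z = 0 ->
  (forall k, rec2 a b c e k = 0) ->
  exists A B, forall k, e k = A * r ^ k + B * z ^ k.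
Proof.
  intros Ha Hrz Hr Hz He.
  set (B := (e 1%nat - r * e 0%nat) / (z - r)).
  exists (e 0%nat - B), B.
  assert (Hpair : forall k, e k = (e 0%nat - B) * r ^ k + B * z ^ k
                         /\ e (S k) = (e 0%nat - B) * r ^ S k + B * z ^ S k).
  { induction k as [|k [IH0 IH1]].
    - unfold B. simpl. split; field; lra.
    - split; [exact IH1|].
      apply Rmult_eq_reg_l with a; [|exact Ha].
      specialize (He k). unfold rec2 in He. unfold char2 in Hr, Hz.
      replace (a * e (S (S k))) with (- b * e (S k) - c * e k) by lra.
      rewrite IH0, IH1. simpl in *.
      apply Rminus_diag_uniq.
      transitivity (- ((e 0%nat - B) * r ^ k * (a * (r * (r * 1)) + b * r + c)
                       + B * z ^ k * (a * (z * (z * 1)) + b * z + c))); [ring|].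
      rewrite Hr, Hz. ring. }
  intros k. apply Hpair.
Qed.

Lemma rec2_decaying_solution (a b c r z : R) (e : nat -> R) :
  a <> 0 -> 0 < r < z -> char2 a b c r = 0 -> char2 a b c z = 0 ->
  (forall k, rec2 a b c e k = 0) -> is_lim_seq (fun k => e k / z ^ k) 0 ->
  forall k, e k = e 0%nat * r ^ k.
Proof.
  intros Ha Hrz Hr Hz He Hlim.
  destruct (rec2_general_solution a b c r z e Ha ltac:(lra) Hr Hz He) as [A [B Hsol]].
  assert (Hratio : Rabs (r / z) < 1).
  { rewrite Rabs_pos_eq by (apply Rlt_le, Rdiv_lt_0_compat; lra).
    apply Rmult_lt_reg_r with z; [lra|]. unfold Rdiv. rewrite Rmult_assoc, Rinv_l; lra. }
  assert (HB : B = 0).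
  { assert (Hconst : is_lim_seq (fun k => e k / z ^ k - A * (r / z) ^ k) (0 - A * 0)).
    { apply is_lim_seq_minus'; [exact Hlim|].
      apply (is_lim_seq_mult' (fun _ => A)); [apply is_lim_seq_const|].
      apply is_lim_seq_geom, Hratio. }
    apply is_lim_seq_unique in Hconst.
    rewrite (Lim_seq_ext _ (fun _ => B)), Lim_seq_const in Hconst.
    - injection Hconst. lra.
    - intros k. rewrite Hsol. unfold Rdiv. rewrite Rpow_mult_distr, pow_inv.
      field. apply pow_nonzero. lra. }
  intros k. rewrite Hsol, HB. specialize (Hsol 0%nat). rewrite HB in Hsol. simpl in Hsol.
  rewrite Hsol. ring.
Qed.

Lemma is_lim_seq_fsum0 (m : nat) (f : nat -> nat -> R) :
  (forall j, (j <= m)%nat -> is_lim_seq (f j) 0) ->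
  is_lim_seq (fun k => fsum m (fun j => f j k)) 0.
Proof.
  induction m as [|m IHm]; intros Hf; simpl; [apply Hf; lia|].
  replace (Finite 0) with (Rbar_plus 0 0) by (simpl; f_equal; ring).
  apply is_lim_seq_plus'; [apply IHm; intros; apply Hf|apply Hf]; lia.
Qed.

Lemma is_lim_seq_pgeom_div (r z : R) (m : nat) (d : nat -> R) :
  0 < r < z -> is_lim_seq (fun k => pgeom r m d k / z ^ k) 0.
Proof.
  intros Hrz.
  apply (is_lim_seq_ext (fun k => fsum m (fun j => d j * (nbinom j k * (r / z) ^ k)))).
  - intros k. symmetry. unfold pgeom, Rdiv. rewrite Rmult_comm, <- fsum_scal.
    apply fsum_ext. intros j _. unfold bgeom. rewrite Rpow_mult_distr, pow_inv. ring.
  - apply (is_lim_seq_fsum0 m (fun j k => d j * (nbinom j k * (r / z) ^ k))). intros j _.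
    replace (Finite 0) with (Rbar_mult (d j) 0) by (simpl; f_equal; ring).
    apply is_lim_seq_scal_l, is_lim_seq_nbinom_geom. split.
    + apply Rlt_le, Rdiv_lt_0_compat; lra.
    + apply Rmult_lt_reg_r with z; [lra|]. unfold Rdiv. rewrite Rmult_assoc, Rinv_l; lra.
Qed.

Lemma pgeom_opp_add0 (r : R) (m : nat) (d : nat -> R) (x : R) (k : nat) :
  pgeom r m (fun j => if (j =? 0)%nat then x - d j else - d j) k = x * r ^ k - pgeom r m d k.
Proof.
  unfold pgeom, bgeom. induction m as [|m IHm]; simpl; [|rewrite IHm]; ring.
Qed.

Lemma char2_simple_root (a b c r z : R) :
  a <> 0 -> r <> z -> char2 a b c r = 0 -> char2 a b c z = 0 -> 2 * a * r + b <> 0.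
Proof.
  intros Ha Hrz Hr Hz.
  replace (2 * a * r + b) with (a * (r - z)).
  - apply Rmult_integral_contrapositive; split; [exact Ha | lra].
  - apply Rmult_eq_reg_l with (r - z); [|lra].
    unfold char2 in Hr, Hz. simpl in Hr, Hz. nra.
Qed.

Lemma char2_roots (a b c : R) : 0 < a -> 0 < c -> char2 a b c 1 < 0 ->
  let t := sqrt (b ^ 2 - 4 * a * c) in
  char2 a b c ((- b - t) / (2 * a)) = 0 /\ char2 a b c ((- b + t) / (2 * a)) = 0 /\
  0 < (- b - t) / (2 * a) < (- b + t) / (2 * a) /\ 1 < (- b + t) / (2 * a).
Proof.
  intros Ha Hc H1 t. unfold char2 in *.
  assert (Hdisc : 0 < b ^ 2 - 4 * a * c).
  { assert (0 < a * - (a * 1 ^ 2 + b * 1 + c)) by (apply Rmult_lt_0_compat; lra).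
    replace (b ^ 2 - 4 * a * c) with ((2 * a + b) ^ 2 + 4 * (a * - (a * 1 ^ 2 + b * 1 + c)))
      by ring.
    pose proof (pow2_ge_0 (2 * a + b)). lra. }
  assert (Ht2 : t * t = b ^ 2 - 4 * a * c) by (apply sqrt_sqrt; lra).
  assert (Ht : 0 < t) by (apply sqrt_lt_R0, Hdisc).
  assert (Hb : b < 0) by nra.
  assert (Hroot : forall e, e * e = 1 ->
    a * ((- b + e * t) / (2 * a)) ^ 2 + b * ((- b + e * t) / (2 * a)) + c = 0).
  { intros e He.
    replace (a * ((- b + e * t) / (2 * a)) ^ 2 + b * ((- b + e * t) / (2 * a)) + c)
      with (((e * e) * (t * t) - (b ^ 2 - 4 * a * c)) / (4 * a)) by (field; lra).
    rewrite He, Ht2. field. lra. }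
  set (r := (- b - t) / (2 * a)). set (z := (- b + t) / (2 * a)).
  assert (Hr_root : a * r ^ 2 + b * r + c = 0)
    by (unfold r; replace (- b - t) with (- b + -1 * t) by ring; apply Hroot; ring).
  assert (Hz_root : a * z ^ 2 + b * z + c = 0)
    by (unfold z; replace (- b + t) with (- b + 1 * t) by ring; apply Hroot; ring).
  assert (Hr_pos : 0 < r).
  { unfold r. apply Rdiv_lt_0_compat; [|lra]. nra. }
  assert (Hrz : r < z) by (unfold r, z; apply Rmult_lt_compat_r; [apply Rinv_0_lt_compat|]; lra).
  assert (Hvieta : a * 1 ^ 2 + b * 1 + c = a * (1 - r) * (1 - z)).
  { unfold r, z.
    replace (a * (1 - (- b - t) / (2 * a)) * (1 - (- b + t) / (2 * a)))
      with (a + b + (b ^ 2 - t * t) / (4 * a)) by (field; lra).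
    rewrite Ht2. field. lra. }
  repeat split; try assumption.
  destruct (Rle_or_lt z 1) as [Hz1|Hz1]; [|exact Hz1].
  assert (0 <= a * (1 - r) * (1 - z)) by (apply Rmult_le_pos; [apply Rmult_le_pos|]; lra).
  lra.
Qed.

Section TriangularArray.

Variables (a b c a' b' c' r z : R) (pi : nat -> nat -> R).
Hypothesis a_neq0 : a <> 0.
Hypothesis roots_lt : 0 < r < z.
Hypothesis r_root : char2 a b c r = 0.
Hypothesis z_root : char2 a b c z = 0.
Hypothesis row_0 : forall k, rec2 a b c (fun i => pi i 0%nat) k = 0.
Hypothesis row_S :
  forall l k, rec2 a b c (fun i => pi i (S l)) k = - rec2 a' b' c' (fun i => pi i l) k.
Hypothesis row_decay : forall l, is_lim_seq (fun k => pi k l / z ^ k) 0.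

Lemma rows_pgeom (l : nat) :
  exists d, (forall k, pi k l = pgeom r l d k) /\
    d l = (- (char2 a' b' c' r / r) / (2 * a * r + b)) ^ l * pi 0%nat 0%nat.
Proof.
  assert (r_neq0 : r <> 0) by lra.
  assert (r_simple : 2 * a * r + b <> 0)
    by (apply (char2_simple_root a b c r z); auto; lra).
  induction l as [|l [d [Hd Hd_top]]].
  - exists (fun _ => pi 0%nat 0%nat). split; [|simpl; ring].
    intros k. rewrite (rec2_decaying_solution a b c r z (fun i => pi i 0%nat)); auto.
    unfold pgeom, bgeom. simpl. ring.
  - destruct (rec2_pgeom_image a' b' c' r r_neq0 l d) as [e [He_top He]].
    destruct (rec2_pgeom_preimage a b c r r_neq0 r_root r_simple l e) as [d' [Hd'_top Hd']].
    set (E := fun k => pi k (S l) + pgeom r (S l) d' k).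
    assert (HE_rec : forall k, rec2 a b c E k = 0).
    { intros k. unfold E.
      transitivity (rec2 a b c (fun i => pi i (S l)) k + rec2 a b c (pgeom r (S l) d') k);
        [unfold rec2; ring|].
      rewrite row_S, Hd', <- He.
      unfold rec2. rewrite !Hd. ring. }
    assert (HE_decay : is_lim_seq (fun k => E k / z ^ k) 0).
    { apply (is_lim_seq_ext (fun k => pi k (S l) / z ^ k + pgeom r (S l) d' k / z ^ k)).
      - intros k. unfold E. field. apply pow_nonzero; lra.
      - replace (Finite 0) with (Rbar_plus 0 0) by (simpl; f_equal; ring).
        apply is_lim_seq_plus'; [apply row_decay | apply is_lim_seq_pgeom_div, roots_lt]. }
    pose proof (rec2_decaying_solution a b c r z E a_neq0 roots_lt r_root z_root HE_rec HE_decay)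
      as HE.
    exists (fun j => if (j =? 0)%nat then E 0%nat - d' j else - d' j). split.
    + intros k. rewrite pgeom_opp_add0, <- HE. unfold E. ring.
    + simpl Nat.eqb. cbv iota. rewrite <- tech_pow_Rmult, Rmult_assoc, <- Hd_top.
      apply Rmult_eq_reg_l with (2 * a * r + b); [|exact r_simple].
      replace ((2 * a * r + b) * - d' (S l)) with (- ((2 * a * r + b) * d' (S l))) by ring.
      rewrite Hd'_top, He_top. field. split; assumption.
Qed.

End TriangularArray.

(** * The balance equations *)

(* The probabilities of the moves into an interior state (i + 1, l): [a_s] from
   (i + 1 - s, l) and [b_s] from (i + 1 - s, l - 1), with [m] standing for s = -1. *)
Definition a1 (p q muh : R) : R := p * bar q * bar muh.
Definition a0 (p q muh : R) : R := bar p * bar q * bar muh + p * bar q * muh.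
Definition am (p q muh : R) : R := bar p * bar q * muh.
Definition b1 (p q muh : R) : R := p * q * bar muh.
Definition b0 (p q muh : R) : R := p * q * muh + bar p * q * bar muh.
Definition bm (p q muh : R) : R := bar p * q * muh.

Ltac trans_cases :=
  unfold trans;
  repeat (match goal with
          | |- context [if ?c then _ else _] => destruct c eqn:?
          end;
          repeat match goal with
          | H : (_ && _)%bool = true |- _ => apply andb_prop in H; destruct H
          | H : (_ && _)%bool = false |- _ => apply Bool.andb_false_iff in H; destruct H
          | H : (_ =? _)%nat = true |- _ => apply Nat.eqb_eq in H
          | H : (_ =? _)%nat = false |- _ => apply Nat.eqb_neq in H
          | H : (_ <=? _)%nat = true |- _ => apply Nat.leb_le in H
          | H : (_ <=? _)%nat = false |- _ => apply Nat.leb_gt in H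
          end; try lia; try reflexivity).

Section Transitions.

Variables (p q muh mul : R).

Lemma trans_far_j (i j k l : nat) : j <> l -> S j <> l -> trans p q muh mul i j (S k) l = 0.
Proof. intros. trans_cases. Qed.

Lemma trans_far_i (i j k l : nat) :
  i <> k -> i <> S k -> i <> S (S k) -> trans p q muh mul i j (S k) l = 0.
Proof. intros. trans_cases. Qed.

Lemma trans_a1 (k l : nat) : trans p q muh mul k l (S k) l = a1 p q muh.
Proof. unfold a1. trans_cases. Qed.

Lemma trans_a0 (k l : nat) : trans p q muh mul (S k) l (S k) l = a0 p q muh.
Proof. unfold a0. trans_cases. Qed.

Lemma trans_am (k l : nat) : trans p q muh mul (S (S k)) l (S k) l = am p q muh.
Proof. unfold am. trans_cases. Qed.

Lemma trans_b1 (k l : nat) : trans p q muh mul k l (S k) (S l) = b1 p q muh.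
Proof. unfold b1. trans_cases. Qed.

Lemma trans_b0 (k l : nat) : trans p q muh mul (S k) l (S k) (S l) = b0 p q muh.
Proof. unfold b0. trans_cases. Qed.

Lemma trans_bm (k l : nat) : trans p q muh mul (S (S k)) l (S k) (S l) = bm p q muh.
Proof. unfold bm. trans_cases. Qed.

End Transitions.

Section Balance.

Variables (p q muh mul : R) (pi : nat -> nat -> R).
Hypothesis balance : forall k l, pi k l =
  fsum (k + 1) (fun i => fsum (l + 1) (fun j => pi i j * trans p q muh mul i j k l)).

Lemma balance_row0 (k : nat) :
  rec2 (am p q muh) (a0 p q muh - 1) (a1 p q muh) (fun i => pi i 0%nat) k = 0.
Proof.
  enough (E : pi (S k) 0%nat = a1 p q muh * pi k 0%nat + a0 p q muh * pi (S k) 0%nat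
                               + am p q muh * pi (S (S k)) 0%nat) by (unfold rec2; lra).
  rewrite balance at 1. replace (S k + 1)%nat with (S (S k)) by lia.
  rewrite (fsum_ext _ _ (fun i => pi i 0%nat * trans p q muh mul i 0 (S k) 0)).
  2:{ intros i _. simpl. rewrite (trans_far_j p q muh mul i 1 k 0) by lia. ring. }
  rewrite fsum_last_three by (intros i Hi; rewrite trans_far_i by lia; ring).
  rewrite trans_a1, trans_a0, trans_am. ring.
Qed.

Lemma balance_rowS (l k : nat) :
  rec2 (am p q muh) (a0 p q muh - 1) (a1 p q muh) (fun i => pi i (S l)) k =
  - rec2 (bm p q muh) (b0 p q muh) (b1 p q muh) (fun i => pi i l) k.
Proof.
  enough (E : pi (S k) (S l) =
            a1 p q muh * pi k (S l) + a0 p q muh * pi (S k) (S l) + am p q muh * pi (S (S k)) (S l)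
            + (b1 p q muh * pi k l + b0 p q muh * pi (S k) l + bm p q muh * pi (S (S k)) l))
    by (unfold rec2; lra).
  rewrite balance at 1. replace (S k + 1)%nat with (S (S k)) by lia.
  rewrite (fsum_ext _ _ (fun i => pi i l * trans p q muh mul i l (S k) (S l)
                                 + pi i (S l) * trans p q muh mul i (S l) (S k) (S l))).
  2:{ intros i _. replace (S l + 1)%nat with (S (S l)) by lia.
      rewrite fsum_last_three by (intros j Hj; rewrite trans_far_j by lia; ring).
      rewrite (trans_far_j p q muh mul i (S (S l))) by lia. ring. }
  rewrite fsum_last_three by (intros i Hi; rewrite !trans_far_i by lia; ring).
  rewrite trans_a1, trans_a0, trans_am, trans_b1, trans_b0, trans_bm. ring.
Qed.

End Balance.

Lemma series_ge_term (a : nat -> R) (l : nat) :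
  (forall j, 0 <= a j) -> ex_series a -> a l <= Series a.
Proof.
  intros Ha Hex.
  apply Rle_trans with (sum_n a l).
  - rewrite sum_n_Reals, <- fsum_sum_f_R0. apply fsum_ge_last, Ha.
  - apply (is_lim_seq_incr_compare (sum_n a)); [apply Series_correct, Hex|].
    intros n. rewrite sum_Sn. specialize (Ha (S n)). unfold plus; simpl. lra.
Qed.

Lemma stationary_decay (p q muh mul z : R) (pi : nat -> nat -> R) :
  stationary p q muh mul pi -> 1 <= z -> forall l, is_lim_seq (fun k => pi k l / z ^ k) 0.
Proof.
  intros [Hnonneg [Hrows [Htotal _]]] Hz l.
  apply (is_lim_seq_le_le (fun _ => 0) _ (fun k => Series (fun j => pi k j))).
  - intros k. assert (Hzk : 1 <= z ^ k) by (apply pow_R1_Rle; exact Hz). split.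
    + apply Rdiv_le_0_compat; [apply Hnonneg | lra].
    + apply Rle_trans with (pi k l).
      * unfold Rdiv. rewrite <- (Rmult_1_r (pi k l)) at 2.
        apply Rmult_le_compat_l; [apply Hnonneg|].
        rewrite <- Rinv_1. apply Rinv_le_contravar; lra.
      * apply (series_ge_term (fun j => pi k j)); [apply Hnonneg | apply Hrows].
  - apply is_lim_seq_const.
  - apply ex_series_lim_0. exists 1. exact Htotal.
Qed.

Section Rates.

Variables (p q muh mul : R).
Hypothesis params : params_ok p q muh mul.

Let La := am p q muh.
Let Lb := a0 p q muh - 1.
Let Lc := a1 p q muh.

Lemma r0_roots :
  exists z, char2 La Lb Lc (r0 p q muh) = 0 /\ char2 La Lb Lc z = 0 /\ 0 < r0 p q muh < z /\ 1 < z.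
Proof.
  destruct params as [[Hp0 Hp1] [[Hq0 Hq1] [[Hm0 Hm1] _]]].
  assert (HLa : 0 < La)
    by (unfold La, am, bar; apply Rmult_lt_0_compat; [apply Rmult_lt_0_compat|]; lra).
  assert (HLc : 0 < Lc)
    by (unfold Lc, a1, bar; apply Rmult_lt_0_compat; [apply Rmult_lt_0_compat|]; lra).
  assert (H1 : char2 La Lb Lc 1 = - q) by (unfold char2, La, Lb, Lc, am, a0, a1, bar; ring).
  destruct (char2_roots La Lb Lc HLa HLc ltac:(lra)) as [Hr [Hz [Hrz Hz1]]].
  set (t := sqrt (Lb ^ 2 - 4 * La * Lc)) in *.
  exists ((- Lb + t) / (2 * La)).
  replace (r0 p q muh) with ((- Lb - t) / (2 * La)); [auto|].
  assert (Ht2 : t * t = Lb ^ 2 - 4 * La * Lc).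
  { unfold t. apply sqrt_sqrt.
    replace (Lb ^ 2 - 4 * La * Lc) with ((2 * La + Lb) ^ 2 - 4 * La * char2 La Lb Lc 1)
      by (unfold char2; ring).
    rewrite H1. pose proof (pow2_ge_0 (2 * La + Lb)). nra. }
  assert (Ht : 0 <= t) by apply sqrt_pos.
  assert (HLb : Lb < 0) by (unfold char2 in H1; nra).
  unfold r0, x1_0.
  replace (Delta0 p q muh) with (Lb ^ 2 - 4 * La * Lc)
    by (unfold Delta0, La, Lb, Lc, am, a0, a1; ring).
  replace (1 - (p * muh + bar p * bar muh) * bar q) with (- Lb) by (unfold Lb, a0; ring).
  replace (2 * p * bar muh * bar q) with (2 * Lc) by (unfold Lc, a1; ring).
  fold t. field_simplify_eq; [nra | repeat split; lra].
Qed.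

Lemma Cconst_ratio :
  0 < r0 p q muh -> char2 La Lb Lc (r0 p q muh) = 0 -> 2 * La * r0 p q muh + Lb <> 0 ->
  - (char2 (bm p q muh) (b0 p q muh) (b1 p q muh) (r0 p q muh) / r0 p q muh)
    / (2 * La * r0 p q muh + Lb) = Cconst p q muh.
Proof.
  destruct params as [_ [[Hq0 Hq1] _]].
  unfold Cconst. set (r := r0 p q muh). intros Hr Hroot Hsimple.
  assert (Hdiag : 2 * La * r + Lb = - (bar q * (p * bar muh - bar p * muh * r ^ 2)) / r).
  { apply Rmult_eq_reg_r with r; [|lra]. unfold char2 in Hroot.
    unfold La, Lb, Lc, am, a0, a1 in *. field_simplify; [|lra]. nra. }
  assert (Hden : p * bar muh - bar p * muh * r ^ 2 <> 0).
  { intros E. apply Hsimple. rewrite Hdiag, E. field. lra. }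
  rewrite Hdiag. unfold char2, bm, b0, b1, bar in *. field. repeat split; lra.
Qed.

End Rates.

Lemma stationary_rows (p q muh mul : R) (pi : nat -> nat -> R) :
  params_ok p q muh mul -> stationary p q muh mul pi ->
  forall l, exists d, (forall k, pi k l = pgeom (r0 p q muh) l d k) /\
                 d l = Cconst p q muh ^ l * pi 0%nat 0%nat.
Proof.
  intros Hpar Hst l.
  destruct (r0_roots p q muh mul Hpar) as [z [Hr [Hz [Hrz Hz1]]]].
  assert (Ham : am p q muh <> 0).
  { destruct Hpar as [[Hp0 Hp1] [[Hq0 Hq1] [[Hm0 Hm1] _]]].
    unfold am, bar. apply Rgt_not_eq, Rmult_lt_0_compat; [apply Rmult_lt_0_compat|]; lra. }
  pose proof Hst as [_ [_ [_ Hbal]]].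
  destruct (rows_pgeom (am p q muh) (a0 p q muh - 1) (a1 p q muh)
              (bm p q muh) (b0 p q muh) (b1 p q muh) (r0 p q muh) z pi Ham Hrz Hr Hz
              (balance_row0 p q muh mul pi Hbal) (balance_rowS p q muh mul pi Hbal)
              (stationary_decay p q muh mul z pi Hst ltac:(lra)) l) as [d [Hd Hd_top]].
  exists d. split; [exact Hd|].
  rewrite Hd_top, (Cconst_ratio p q muh mul Hpar); auto; [lra|].
  apply (char2_simple_root _ _ (a1 p q muh) _ z); auto; lra.
Qed.

(** * Generating functions *)

(* Complex differentiability with values in [AbsRing_NormedModule C_AbsRing], the form
   required by [is_derive_mult]; [Cex_derive_C] converts to the [C_NormedModule] form. *)
Local Notation Cex_derive f z :=
  (ex_derive (K := C_AbsRing) (V := AbsRing_NormedModule C_AbsRing) f z).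

Lemma is_derive_Cinv (z0 : C) : z0 <> 0%C ->
  is_derive (K := C_AbsRing) (V := AbsRing_NormedModule C_AbsRing) Cinv z0 (- / (z0 * z0))%C.
Proof.
  intros Hz0. split; [apply is_linear_scal_l|].
  intros x Hx.
  apply (is_filter_lim_locally_unique (K := C_AbsRing) (V := AbsRing_NormedModule C_AbsRing)) in Hx.
  subst x.
  intros eps. pose proof (cond_pos eps) as Heps.
  set (m := Cmod z0).
  assert (Hm : 0 < m) by (apply Cmod_gt_0, Hz0).
  assert (Hdelta : 0 < Rmin (m / 2) (eps * m ^ 3 / 2))
    by (apply Rmin_pos; [lra|];
        apply Rmult_lt_0_compat; [apply Rmult_lt_0_compat|]; try apply pow_lt; lra).
  apply (locally_le_locally_norm (K := C_AbsRing) (V := AbsRing_NormedModule C_AbsRing)).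
  exists (mkposreal _ Hdelta). intros y Hy.
  change (Cmod (y - z0) < Rmin (m / 2) (eps * m ^ 3 / 2)) in Hy.
  set (d := Cmod (y - z0)) in *.
  assert (Hd_m : d < m / 2) by (eapply Rlt_le_trans; [exact Hy | apply Rmin_l]).
  assert (Hd_eps : d < eps * m ^ 3 / 2) by (eapply Rlt_le_trans; [exact Hy | apply Rmin_r]).
  assert (Hy_big : m / 2 < Cmod y).
  { pose proof (Cmod_triangle y (z0 - y)) as Htri.
    replace (y + (z0 - y))%C with z0 in Htri by ring.
    replace (z0 - y)%C with (- (y - z0))%C in Htri by ring. rewrite Cmod_opp in Htri.
    fold m d in Htri. lra. }
  assert (Hy0 : y <> RtoC 0) by (apply Cmod_gt_0; lra).
  change (Cmod ((Cinv y - Cinv z0) - (y - z0) * (- / (z0 * z0)))%C <= eps * d).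
  replace ((Cinv y - Cinv z0) - (y - z0) * (- / (z0 * z0)))%C
    with ((y - z0) * (y - z0) / (y * (z0 * z0)))%C by (field; split; exact Hy0 || exact Hz0).
  rewrite Cmod_div by (repeat apply Cmult_neq_0; assumption).
  rewrite !Cmod_mult. fold m d.
  assert (Hd0 : 0 <= d) by apply Cmod_ge_0.
  apply Rle_div_l; [apply Rmult_lt_0_compat; [lra | nra]|].
  replace (eps * d * (Cmod y * (m * m))) with (d * (eps * (Cmod y * (m * m)))) by ring.
  apply Rmult_le_compat_l; [exact Hd0|].
  apply Rle_trans with (eps * (m / 2 * (m * m))); [simpl in Hd_eps; lra|].
  apply Rmult_le_compat_l; [lra|]. apply Rmult_le_compat_r; [nra | lra].
Qed.

Lemma Cex_derive_C (f : C -> C) (z : C) :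
  Cex_derive f z -> ex_derive (K := C_AbsRing) (V := C_NormedModule) f z.
Proof. intros [l [[Hadd Hscal Hbnd] Hdiff]]. exists l. split; [split|]; assumption. Qed.

Lemma Cex_derive_mult (f g : C -> C) (z : C) :
  Cex_derive f z -> Cex_derive g z -> Cex_derive (fun x => f x * g x)%C z.
Proof.
  intros [df Hf] [dg Hg]. eexists. apply (is_derive_mult f g z df dg Hf Hg).
  intros u v. apply Cmult_comm.
Qed.

Lemma Cex_derive_pow (f : C -> C) (z : C) (n : nat) :
  Cex_derive f z -> Cex_derive (fun x => f x ^ n)%C z.
Proof.
  intros Hf. induction n as [|n IHn]; simpl; [apply ex_derive_const|].
  apply Cex_derive_mult; assumption.
Qed.

Lemma Cex_derive_inv (f : C -> C) (z : C) :
  f z <> RtoC 0 -> Cex_derive f z -> Cex_derive (fun x => / f x)%C z.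
Proof.
  intros Hfz [df Hf]. eexists.
  apply (is_derive_comp (V := AbsRing_NormedModule C_AbsRing) Cinv f z (- / (f z * f z))%C df);
    [apply is_derive_Cinv|]; assumption.
Qed.

Lemma Cex_derive_plus (f g : C -> C) (z : C) :
  Cex_derive f z -> Cex_derive g z -> Cex_derive (fun x => f x + g x)%C z.
Proof. apply (ex_derive_plus (K := C_AbsRing) (V := AbsRing_NormedModule C_AbsRing)). Qed.

Lemma Cex_derive_sum_n (f : nat -> C -> C) (z : C) (n : nat) :
  (forall m, (m <= n)%nat -> Cex_derive (f m) z) ->
  Cex_derive (fun x => sum_n (fun m => f m x) n) z.
Proof.
  induction n as [|n IHn]; intros Hf.
  - apply (ex_derive_ext (V := AbsRing_NormedModule C_AbsRing) (f 0%nat));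
      [intros t; rewrite sum_O; reflexivity | apply Hf; lia].
  - apply (ex_derive_ext (V := AbsRing_NormedModule C_AbsRing)
      (fun x => (sum_n (fun m => f m x) n + f (S n) x)%C)).
    + intros t. rewrite sum_Sn. reflexivity.
    + apply Cex_derive_plus; [apply IHn; intros; apply Hf | apply Hf]; lia.
Qed.

Lemma Cex_derive_affine (a b z : C) : Cex_derive (fun x => a - b * x)%C z.
Proof.
  apply (ex_derive_ext (V := AbsRing_NormedModule C_AbsRing) (fun x => a + (- b) * x)%C);
    [intros t; simpl; ring|].
  apply (Cex_derive_plus (fun _ => a) (fun x => - b * x)%C); [apply ex_derive_const|].
  apply (Cex_derive_mult (fun _ => - b)%C (fun x => x));
    [apply ex_derive_const | apply ex_derive_id].
Qed.

Lemma filterlim_C_bounded_zero (u : nat -> C) (g : nat -> R) :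
  (forall n, Cmod (u n) <= g n) -> is_lim_seq g 0 ->
  filterlim u eventually (locally (T := C_NormedModule) (RtoC 0)).
Proof.
  intros Hug Hg. apply (filterlim_norm_zero (K := C_AbsRing) (V := C_NormedModule)).
  assert (Hnorm : is_lim_seq (fun n => Cmod (u n)) 0).
  { apply (is_lim_seq_le_le (fun _ => 0) _ g); [|apply is_lim_seq_const | exact Hg].
    intros n. split; [apply Cmod_ge_0 | apply Hug]. }
  exact Hnorm.
Qed.

Lemma filterlim_C_scal_minus (c x : C) (u v : nat -> C) :
  filterlim u eventually (locally (T := C_NormedModule) x) ->
  filterlim v eventually (locally (T := C_NormedModule) (RtoC 0)) ->
  filterlim (fun n => c * (u n - v n))%C eventually (locally (T := C_NormedModule) (c * x)%C).
Proof.
  intros Hu Hv.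
  assert (Hdiff : filterlim (fun n => plus (u n) (opp (v n))) eventually
                    (locally (T := C_NormedModule) (plus x (opp (RtoC 0))))).
  { apply (filterlim_comp_2 (G := locally (T := C_NormedModule) x)
             (H := locally (T := C_NormedModule) (opp (RtoC 0))) u (fun n => opp (v n)) plus Hu).
    - exact (filterlim_comp _ _ _ v opp _ _ _ Hv (filterlim_opp (K := C_AbsRing) (RtoC 0))).
    - apply (filterlim_plus (K := C_AbsRing) (V := C_NormedModule)). }
  replace (c * x)%C with (scal (K := C_AbsRing) (V := C_NormedModule) c (plus x (opp (RtoC 0))))
    by (change (c * (x + - 0) = c * x)%C; ring).
  exact (filterlim_comp _ _ _ _ (fun y => scal (K := C_AbsRing) (V := C_NormedModule) c y) _ _ _
           Hdiff (filterlim_scal_r (K := C_AbsRing) (V := C_NormedModule) c _)).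
Qed.

Lemma sum_n_geom_C (w : C) (N : nat) : (1 - w)%C <> RtoC 0 ->
  sum_n (fun k => RtoC (nbinom 0 k) * w ^ k)%C N = (/ (1 - w) * (1 - w ^ S N))%C.
Proof.
  intros Hw. induction N as [|N IHN].
  - rewrite sum_O. simpl. field. exact Hw.
  - rewrite sum_Sn, IHN. change plus with Cplus. simpl. field. exact Hw.
Qed.

Lemma sum_n_nbinom_S_C (w : C) (m N : nat) : (1 - w)%C <> RtoC 0 ->
  sum_n (fun k => RtoC (nbinom (S m) k) * w ^ k)%C N =
  (/ (1 - w) * (sum_n (fun k => RtoC (nbinom m k) * w ^ k)%C N
                - RtoC (nbinom (S m) N) * w ^ S N))%C.
Proof.
  intros Hw. induction N as [|N IHN].
  - rewrite !sum_O, !nbinom_0_r. simpl. field. exact Hw.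
  - rewrite !sum_Sn, IHN, nbinom_S_S, RtoC_plus. change plus with Cplus. simpl. field. exact Hw.
Qed.

Lemma is_series_nbinom_C (w : C) (m : nat) : Cmod w < 1 ->
  is_series (K := C_AbsRing) (V := C_NormedModule)
    (fun k => RtoC (nbinom m k) * w ^ k)%C ((/ (1 - w)) ^ S m)%C.
Proof.
  intros Hw.
  assert (Hw1 : (1 - w)%C <> RtoC 0).
  { intros E.
    replace w with (RtoC 1) in Hw by (replace w with (1 - (1 - w))%C by ring; rewrite E; ring).
    rewrite Cmod_1 in Hw. lra. }
  assert (Hw0 : 0 <= Cmod w) by apply Cmod_ge_0.
  assert (Hrem : forall j, filterlim (fun N => RtoC (nbinom j N) * w ^ S N)%C eventually
                            (locally (T := C_NormedModule) (RtoC 0))).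
  { intros j. apply (filterlim_C_bounded_zero _ (fun N => nbinom j N * Cmod w ^ N)).
    - intros N. rewrite Cmod_mult, Cmod_R, Cmod_pow, Rabs_pos_eq by (left; apply nbinom_pos).
      apply Rmult_le_compat_l; [left; apply nbinom_pos|]. simpl.
      rewrite <- (Rmult_1_l (Cmod w ^ N)) at 2. apply Rmult_le_compat_r; [apply pow_le|]; lra.
    - apply is_lim_seq_nbinom_geom. lra. }
  induction m as [|m IHm]; unfold is_series.
  - apply (filterlim_ext (fun N => / (1 - w) * (1 - w ^ S N))%C);
      [intros N; rewrite sum_n_geom_C by exact Hw1; reflexivity|].
    replace ((/ (1 - w)) ^ 1)%C with (/ (1 - w) * 1)%C by ring.
    apply filterlim_C_scal_minus; [apply filterlim_const|].
    apply (filterlim_ext (fun N => RtoC (nbinom 0 N) * w ^ S N)%C); [intros N; simpl; ring|].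
    apply Hrem.
  - apply (filterlim_ext (fun N => / (1 - w) * (sum_n (fun k => RtoC (nbinom m k) * w ^ k)%C N
                                      - RtoC (nbinom (S m) N) * w ^ S N))%C);
      [intros N; rewrite sum_n_nbinom_S_C by exact Hw1; reflexivity|].
    replace ((/ (1 - w)) ^ S (S m))%C with (/ (1 - w) * (/ (1 - w)) ^ S m)%C by (simpl; ring).
    apply filterlim_C_scal_minus; [apply IHm | apply Hrem].
Qed.

Lemma RtoC_fsum (n : nat) (f : nat -> R) : RtoC (fsum n f) = sum_n (fun m => RtoC (f m)) n.
Proof.
  induction n as [|n IHn]; simpl; [rewrite sum_O; reflexivity|].
  rewrite sum_Sn, RtoC_plus, IHn. reflexivity.
Qed.

Lemma sum_n_C_last (n : nat) (f : nat -> C) :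
  (forall m, (m < n)%nat -> f m = RtoC 0) -> sum_n f n = f n.
Proof.
  induction n as [|n IHn]; intros Hf; [apply sum_O|].
  rewrite sum_Sn, IHn by (intros; apply Hf; lia). rewrite (Hf n) by lia.
  change (0 + f (S n) = f (S n))%C. ring.
Qed.

Lemma is_series_sum_n_C (j : nat) (f : nat -> nat -> C) (L : nat -> C) :
  (forall m, (m <= j)%nat -> is_series (K := C_AbsRing) (V := C_NormedModule) (f m) (L m)) ->
  is_series (K := C_AbsRing) (V := C_NormedModule) (fun i => sum_n (fun m => f m i) j) (sum_n L j).
Proof.
  induction j as [|j IHj]; intros Hf.
  - apply (is_series_ext (f 0%nat)); [intros i; rewrite sum_O; reflexivity|].
    rewrite sum_O. apply Hf; lia.
  - apply (is_series_ext (fun i => plus (sum_n (fun m => f m i) j) (f (S j) i)));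
      [intros i; rewrite sum_Sn; reflexivity|].
    rewrite sum_Sn. apply (is_series_plus (K := C_AbsRing) (V := C_NormedModule));
      [apply IHj; intros; apply Hf | apply Hf]; lia.
Qed.

Definition pgeom_genfun (r : R) (j : nat) (d : nat -> R) (z : C) : C :=
  sum_n (fun m => RtoC (d m) * (/ (1 - RtoC r * z)) ^ S m)%C j.

Lemma is_series_pgeom_genfun (r : R) (j : nat) (d : nat -> R) (z : C) :
  Cmod (RtoC r * z) < 1 ->
  is_series (K := C_AbsRing) (V := C_NormedModule)
    (fun i => RtoC (pgeom r j d i) * z ^ i)%C (pgeom_genfun r j d z).
Proof.
  intros Hrz.
  apply (is_series_ext
    (fun i => sum_n (fun m => RtoC (d m) * (RtoC (nbinom m i) * (RtoC r * z) ^ i))%C j)).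
  - intros i. unfold pgeom, bgeom. rewrite RtoC_fsum.
    rewrite <- (sum_n_mult_r (K := C_Ring)). apply sum_n_ext. intros m.
    rewrite !RtoC_mult, RtoC_pow, Cpow_mult_l. unfold mult; simpl. ring.
  - unfold pgeom_genfun. apply is_series_sum_n_C. intros m _.
    apply (is_series_scal (K := C_AbsRing) (V := C_NormedModule) (RtoC (d m))).
    apply is_series_nbinom_C, Hrz.
Qed.

Lemma pgeom_genfun_derive (r : R) (j : nat) (d : nat -> R) (z : C) :
  (1 - RtoC r * z)%C <> RtoC 0 ->
  ex_derive (K := C_AbsRing) (V := C_NormedModule) (pgeom_genfun r j d) z.
Proof.
  intros Hz. apply Cex_derive_C. unfold pgeom_genfun.
  apply (Cex_derive_sum_n (fun m x => RtoC (d m) * (/ (1 - RtoC r * x)) ^ S m)%C). intros m _.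
  apply (Cex_derive_mult (fun _ => RtoC (d m))); [apply ex_derive_const|].
  apply (Cex_derive_pow (fun x => / (1 - RtoC r * x))%C).
  apply (Cex_derive_inv (fun x => 1 - RtoC r * x)%C); [exact Hz | apply Cex_derive_affine].
Qed.

Definition pgeom_genfun_numerator (r : R) (j : nat) (d : nat -> R) (z : C) : C :=
  sum_n (fun m => RtoC (d m) * (1 - RtoC r * z) ^ (j - m))%C j.

Lemma pgeom_genfun_factor (r : R) (j : nat) (d : nat -> R) (z : C) :
  (1 - RtoC r * z)%C <> RtoC 0 ->
  ((1 - RtoC r * z) ^ (j + 1) * pgeom_genfun r j d z)%C = pgeom_genfun_numerator r j d z.
Proof.
  intros Hz. unfold pgeom_genfun, pgeom_genfun_numerator.
  rewrite <- (sum_n_mult_l (K := C_Ring)). apply sum_n_ext_loc. intros m Hm.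
  set (t := (1 - RtoC r * z)%C) in *.
  replace (j + 1)%nat with (j - m + S m)%nat by lia.
  rewrite Cpow_add_r, (Cpow_inv t (S m)) by exact Hz.
  change (t ^ (j - m) * t ^ S m * (RtoC (d m) * / t ^ S m) = RtoC (d m) * t ^ (j - m))%C.
  field. apply Cpow_nz, Hz.
Qed.

Lemma pgeom_genfun_numerator_at_pole (r : R) (j : nat) (d : nat -> R) (z : C) :
  (1 - RtoC r * z)%C = RtoC 0 -> pgeom_genfun_numerator r j d z = RtoC (d j).
Proof.
  intros Hz. unfold pgeom_genfun_numerator. rewrite Hz, sum_n_C_last.
  - rewrite Nat.sub_diag. simpl. ring.
  - intros m Hm. replace (j - m)%nat with (S (j - m - 1)) by lia. simpl. ring.
Qed.

Lemma pgeom_genfun_numerator_continuous (r : R) (j : nat) (d : nat -> R) (z : C) :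
  filterlim (pgeom_genfun_numerator r j d) (locally z) (locally (pgeom_genfun_numerator r j d z)).
Proof.
  assert (Hder : Cex_derive (pgeom_genfun_numerator r j d) z).
  { apply (Cex_derive_sum_n (fun m x => RtoC (d m) * (1 - RtoC r * x) ^ (j - m))%C). intros m _.
    apply (Cex_derive_mult (fun _ => RtoC (d m))); [apply ex_derive_const|].
    apply (Cex_derive_pow (fun x => 1 - RtoC r * x)%C), Cex_derive_affine. }
  intros P HP. apply locally_C. apply (ex_derive_continuous _ _ Hder), locally_C, HP.
Qed.

Lemma pgeom_genfun_pole (r : R) (j : nat) (d : nat -> R) (z0 : C) (D : C -> Prop) :
  (1 - RtoC r * z0)%C = RtoC 0 -> (forall z, D z -> (1 - RtoC r * z)%C <> RtoC 0) ->
  filterlim (fun z => (1 - RtoC r * z) ^ (j + 1) * pgeom_genfun r j d z)%C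
    (within D (locally z0)) (locally (RtoC (d j))).
Proof.
  intros Hz0 HD.
  apply (filterlim_ext_loc (pgeom_genfun_numerator r j d)).
  - exists (mkposreal 1 Rlt_0_1). intros z _ Hz. symmetry. apply pgeom_genfun_factor, HD, Hz.
  - rewrite <- (pgeom_genfun_numerator_at_pole r j d z0 Hz0).
    eapply filterlim_filter_le_1; [apply filter_le_within|].
    apply pgeom_genfun_numerator_continuous.
Qed.

Lemma pole_unique (r : R) (z : C) : r <> 0 -> (1 - RtoC r * z)%C = RtoC 0 -> z = RtoC (/ r).
Proof.
  intros Hr Hz.
  assert (Hr' : RtoC r <> RtoC 0) by (intros E; apply RtoC_inj in E; lra).
  replace z with ((1 - (1 - RtoC r * z)) / RtoC r)%C by (field; exact Hr').
  rewrite Hz, RtoC_inv by exact Hr. field. exact Hr'.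
Qed.

Theorem lemma6p1 (p q muh mul : R) (pi : nat -> nat -> R) :
  params_ok p q muh mul ->
  0 < Delta0 p q muh ->
  stationary p q muh mul pi ->
  forall j : nat,
  let rho := / r0 p q muh in
  exists (eps : R) (F : C -> C),
    0 < eps /\
    (forall z : C, (Cmod z < rho \/ (0 < Cmod (z - RtoC rho) < eps)) ->
       ex_derive (K := C_AbsRing) (V := C_NormedModule) F z) /\
    (forall z : C, Cmod z < rho ->
       is_series (K := C_AbsRing) (V := C_NormedModule)
         (fun i => (RtoC (pi i j) * Cpow z i)%C) (F z)) /\
    (exists phi : R, 0 < phi < PI / 2 /\
       filterlim (fun z => (Cpow (1 - RtoC (r0 p q muh) * z) (j + 1) * F z)%C)
         (within (fun z => z <> RtoC rho /\ Cmod (z - RtoC rho) < eps /\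
                           arg_gt phi (z - RtoC rho))
                 (locally (RtoC rho)))
         (locally (RtoC (Cconst p q muh ^ j * pi 0%nat 0%nat)))).
Proof.
  (* Positivity of [Delta0] already follows from [params_ok]. *)
  intros Hpar _ Hst j rho.
  destruct (stationary_rows p q muh mul pi Hpar Hst j) as [d [Hrow Hd_top]].
  destruct (r0_roots p q muh mul Hpar) as [_ [_ [_ [[Hr _] _]]]].
  set (r := r0 p q muh) in *.
  assert (Hrho : 0 < rho) by (apply Rinv_0_lt_compat, Hr).
  assert (Hregular : forall z, z <> RtoC rho -> (1 - RtoC r * z)%C <> RtoC 0)
    by (intros z Hz E; apply Hz, pole_unique; [lra | exact E]).
  exists 1, (pgeom_genfun r j d). split; [lra|]. split; [|split].
  - intros z Hz. apply pgeom_genfun_derive, Hregular. intros ->.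
    replace (RtoC rho - RtoC rho)%C with (RtoC 0) in Hz by ring.
    rewrite Cmod_0, Cmod_R, Rabs_pos_eq in Hz; lra.
  - intros z Hz. apply (is_series_ext (fun i => RtoC (pgeom r j d i) * z ^ i)%C);
      [intros i; rewrite Hrow; reflexivity|].
    apply is_series_pgeom_genfun.
    rewrite Cmod_mult, Cmod_R, Rabs_pos_eq by lra.
    replace 1 with (r * rho) by (unfold rho; field; lra).
    apply Rmult_lt_compat_l; assumption.
  - (* The limit holds on the whole punctured neighbourhood, so any sector will do. *)
    exists (PI / 4). split; [pose proof PI_RGT_0; lra|].
    rewrite <- Hd_top. apply pgeom_genfun_pole.
    + rewrite <- RtoC_mult. replace (r * rho) with 1 by (unfold rho; field; lra). ring.
    + intros z [Hz _]. apply Hregular, Hz.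
Qed.
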